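(* Let $F$ be a finite field and $G$ a finite abelian group. Let $0<r<1$, for each $n$ put $k=[rn]$ (the integer nearest to $rn$), and let $A$ be chosen uniformly at random from $(FG)^{k\times n}$. Then $\lim_{n\to\infty}\Pr(A \text{ is full-rank})=1$, equivalently $\lim_{n\to\infty}\Pr(A\text{ is not full-rank})=0$, and both limits converge exponentially.
   Context: $FG$ is the group algebra of $G$ over $F$. A matrix $A\in(FG)^{k\times n}$ is full-rank if its $FG$-rank equals $k$; equivalently, the $F$-dimension of $\{\mathbf{b}A\mid\mathbf{b}\in(FG)^k\}\subseteq(FG)^n$ equals $k|G|$. *)

From HB Require Import structures.
From mathcomp Require Import all_boot all_order all_algebra all_fingroup.
From mathcomp Require Import reals.
Set Implicit Arguments. Unset Strict Implicit. Unset Printing Implicit Defensive.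
Import Order.TTheory GRing.Theory Num.Theory.
Local Open Scope ring_scope.

(* The group algebra FG is modelled by its underlying F-vector space
   {ffun gT -> F}; the product is convolution (a*b)(h) = \sum_g a g * b (g^-1 h). *)

(* For A in (FG)^{k x n}, the F-linear map b |-> bA from (FG)^k to (FG)^n,
   written as an F-matrix w.r.t. the standard F-bases {delta_g e_i}:
   the basis vector indexed by (i,g) (= g placed in coordinate i) is sent to
   the vector whose j-th coordinate is g * A i j, whose coefficient at h is
   A i j (g^-1 * h). *)
Definition regmx (F : finFieldType) (gT : finGroupType) (k n : nat)
  (A : 'M[{ffun gT -> F}]_(k, n)) :
  'M[F]_(#|{: 'I_k * gT}|, #|{: 'I_n * gT}|) :=
  \matrix_(p, q)
     let: (i, g) := enum_val p in
     let: (j, h) := enum_val q in A i j (g^-1 * h)%g.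

(* A is full-rank iff the F-dimension of {bA | b in (FG)^k} equals k|G|;
   that F-dimension is the rank of the matrix of the F-linear map b |-> bA. *)
Definition fullrank (F : finFieldType) (gT : finGroupType) (k n : nat)
  (A : 'M[{ffun gT -> F}]_(k, n)) : bool :=
  \rank (regmx A) == (k * #|gT|)%N.

Definition prob_not_fullrank (R : realType) (F : finFieldType) (gT : finGroupType)
  (k n : nat) : R :=
  (#|[set A : 'M[{ffun gT -> F}]_(k, n) | ~~ fullrank A]|)%:R
  / (#|{: 'M[{ffun gT -> F}]_(k, n)}|)%:R.

(* k = [r n], the integer nearest to r n (ties rounded up). *)
Definition nearest_k (R : realType) (r : R) (n : nat) : nat :=
  Num.truncn (r * n%:R + 2^-1).

From HB Require Import structures.
From mathcomp Require Import all_boot all_order all_algebra all_fingroup.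
From mathcomp Require Import reals zify ring lra.
Set Implicit Arguments. Unset Strict Implicit. Unset Printing Implicit Defensive.
Import Order.TTheory GRing.Theory Num.Theory.
Local Open Scope ring_scope.

(* If A is not full-rank, some nonzero b in (FG)^k has bA = 0.  When the
   coefficient matrix of b has rank r, every column of A must lie in the kernel
   of a |-> b_1 a_1 + ... + b_k a_k, whose codimension is at least r, so at most
   a fraction |F|^(-r n) of all A satisfy bA = 0.  Summing over b, grouped by
   row space, bounds the probability by |F|^(|G|^2) |F|^(-(n-k)), and n - [r n]
   grows linearly in n. *)

Section RowSpaceCounting.
Variable F : finFieldType.
Local Notation Q := #|F|.

Lemma card_submx k N m (W : 'M[F]_(m, N)) :
  #|[set B : 'M[F]_(k, N) | (B <= W)%MS]| = (Q ^ (k * \rank W))%N.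
Proof.
have inj : injective (fun X : 'M[F]_(k, \rank W) => X *m row_base W).
  exact: row_free_inj (row_base_free W).
rewrite -card_mx -cardsT -(card_imset _ inj); apply: eq_card => B.
rewrite inE; apply/idP/imsetP => [|[D _ ->]]; last first.
  by rewrite -(eq_row_base W) submxMl.
by rewrite -(eq_row_base W) => /submxP[D ->]; exists D.
Qed.

Lemma card_rV_ker K N (T : 'M[F]_(K, N)) :
  #|[set x : 'rV[F]_K | x *m T == 0]| = (Q ^ (K - \rank T))%N.
Proof.
rewrite -mxrank_ker -(mul1n (\rank _)) -card_submx; apply: eq_card => x.
by rewrite !inE sub_kermx.
Qed.

(* Group the B by their row space W: the at most Q^(k rank W) matrices with
   row space W contribute at most 1 in total, and there are at most Q^(N N)
   possible W. *)
Lemma sum_invX_rank_le (R : numFieldType) k N :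
  \sum_(B : 'M[F]_(k, N)) ((Q%:R : R) ^+ (k * \rank B))^-1 <= Q%:R ^+ (N * N).
Proof.
have Q0 : (Q%:R : R) != 0 by rewrite pnatr_eq0 -lt0n; apply/card_gt0P; exists 0.
rewrite (partition_big (fun B => <<B>>%MS : 'M[F]_N) xpredT) //=.
have -> : (Q%:R : R) ^+ (N * N) = \sum_(W : 'M[F]_N) 1.
  by rewrite sumr_const card_mx -natrX.
apply: ler_sum => W _.
apply: (@le_trans _ _ (\sum_(B in [set B : 'M[F]_(k, N) | (B <= W)%MS])
    ((Q%:R : R) ^+ (k * \rank W))^-1)).
  rewrite [leRHS]big_mkcond [leLHS]big_mkcond /=; apply: ler_sum => B _.
  case: (<<B>>%MS =P W) => [<-|_]; first by rewrite inE genmxE submx_refl genmxE.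
  by case: ifP => // _; rewrite invr_ge0 exprn_ge0 ?ler0n.
by rewrite sumr_const card_submx -[_ *+ _]mulr_natr natrX mulVf ?expf_neq0.
Qed.

End RowSpaceCounting.

Lemma leq_card_bigcup (I T : finType) (P : pred I) (S : I -> {set T}) :
  (#|\bigcup_(i | P i) S i| <= \sum_(i | P i) #|S i|)%N.
Proof.
elim/big_rec2: _ => [|i U m _ IH]; first by rewrite cards0.
exact: leq_trans (leq_card_setU _ _).1 (leq_add (leqnn _) IH).
Qed.

Section GroupAlgebraCounting.
Variables (F : finFieldType) (gT : finGroupType) (k n : nat).
Local Notation K := #|{: 'I_k * gT}|.
Local Notation N := #|gT|.
Local Notation FGmx := 'M[{ffun gT -> F}]_(k, n).

(* A matrix B : 'M_(k, N) encodes the row b = (b_1, ..., b_k) in (FG)^k, the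
   coefficient of b_i at g being B i (enum_rank g); fgvec B is b in the F-basis
   used by regmx, and leftmulmx B is the matrix of a |-> b_1 a_1 + ... + b_k a_k
   from (FG)^k (as column) to FG. *)
Definition fgvec (B : 'M[F]_(k, N)) : 'rV[F]_K :=
  \row_p B (enum_val p).1 (enum_rank (enum_val p).2).

Definition leftmulmx (B : 'M[F]_(k, N)) : 'M[F]_(K, N) :=
  \matrix_(p, h) B (enum_val p).1 (enum_rank (enum_val h * (enum_val p).2^-1)%g).

Definition fgcol (A : FGmx) (j : 'I_n) : 'rV[F]_K :=
  \row_p A (enum_val p).1 j (enum_val p).2.

Lemma sum_enum_pair (f : 'I_k * gT -> F) :
  \sum_(p < K) f (enum_val p) = \sum_i \sum_g f (i, g).
Proof. by rewrite -(big_enum_val f) pair_big; apply: eq_big => [x|[i g] _]; rewrite ?inE. Qed.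

Lemma fgcol_mul_leftmulmx A B j (h : 'I_N) :
  (fgcol A j *m leftmulmx B) 0 h = (fgvec B *m regmx A) 0 (enum_rank (j, enum_val h)).
Proof.
rewrite !mxE; under eq_bigr do rewrite !mxE.
under [RHS]eq_bigr do rewrite !mxE enum_rankK.
rewrite (sum_enum_pair (fun x => A x.1 j x.2 * B x.1 (enum_rank (enum_val h * x.2^-1)%g))).
rewrite (sum_enum_pair (fun x => B x.1 (enum_rank x.2) *
  (let: (i, g) := x in A i j (g^-1 * enum_val h)%g))) /=.
apply: eq_bigr => i _.
have hinj : injective (fun g => enum_val h * g^-1)%g.
  by apply: (can_inj (g := fun g => g^-1 * enum_val h)%g) => g; rewrite invMg invgK mulgKV.
rewrite [RHS](reindex_inj hinj) /=; apply: eq_bigr => g _.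
by rewrite mulrC invMg invgK mulgKV.
Qed.

Lemma fgcol_ker_leftmulmx A B j :
  fgvec B *m regmx A = 0 -> fgcol A j *m leftmulmx B = 0.
Proof. by move=> bA0; apply/rowP => h; rewrite fgcol_mul_leftmulmx bA0 !mxE. Qed.

Lemma mxrank_leftmulmx B : (\rank B <= \rank (leftmulmx B))%N.
Proof.
have rowsubB : rowsub (fun i => enum_rank (i, 1%g)) (leftmulmx B) = B.
  by apply/matrixP => i h; rewrite !mxE enum_rankK /= invg1 mulg1 enum_valK.
by rewrite -{1}rowsubB mxrankS // rowsub_sub.
Qed.

Lemma card_annihilated B :
  (#|[set A : FGmx | fgvec B *m regmx A == 0%R]| <= (#|F| ^ (K - \rank B)) ^ n)%N.
Proof.
pose cols (A : FGmx) : {ffun 'I_n -> 'rV[F]_K} := [ffun j => fgcol A j].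
have cols_inj : injective cols.
  move=> A1 A2 /ffunP eqA; apply/matrixP => i j; apply/ffunP => g.
  by have /rowP/(_ (enum_rank (i, g))) := eqA j; rewrite !ffunE !mxE enum_rankK.
rewrite -(card_imset _ cols_inj).
apply: (@leq_trans #|ffun_on [set x : 'rV[F]_K | x *m leftmulmx B == 0]|).
  apply/subset_leq_card/subsetP => _ /imsetP[A + ->]; rewrite inE => /eqP bA0.
  by apply/ffun_onP => j; rewrite ffunE inE fgcol_ker_leftmulmx.
rewrite card_ffun_on card_rV_ker card_ord -!expnM leq_pexp2l //.
  by apply/card_gt0P; exists 0.
by rewrite leq_mul2r leq_sub2l ?orbT // mxrank_leftmulmx.
Qed.

Lemma not_fullrank_annihilated :
  [set A : FGmx | ~~ fullrank A] \subset
    \bigcup_(B | B != 0) [set A | fgvec B *m regmx A == 0].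
Proof.
apply/subsetP => A; rewrite inE => notfull.
have : ~~ row_free (regmx A).
  by apply: contra notfull => /eqP full; rewrite /fullrank full card_prod card_ord.
rewrite -kermx_eq0 => /rowV0Pn[v /sub_kermxP vA0 v0].
pose B := \matrix_(i, h) v 0 (enum_rank (i, enum_val h)) : 'M[F]_(k, N).
have vB : fgvec B = v.
  by apply/rowP => p; rewrite !mxE enum_rankK -surjective_pairing enum_valK.
apply/bigcupP; exists B; last by rewrite inE vB vA0.
by apply: contraNneq v0 => B0; rewrite -vB B0; apply/eqP/rowP => p; rewrite !mxE.
Qed.

Lemma card_not_fullrank_le :
  (#|[set A : FGmx | ~~ fullrank A]| <=
    \sum_(B : 'M[F]_(k, N) | B != 0%R) (#|F| ^ (K - \rank B)) ^ n)%N.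
Proof.
apply: (leq_trans (subset_leq_card not_fullrank_annihilated)).
apply: leq_trans; first exact: leq_card_bigcup.
by apply: leq_sum => B _; apply: card_annihilated.
Qed.

End GroupAlgebraCounting.

Lemma not_fullrank_exponent_le N k n r : (0 < N)%N -> (0 < r <= k)%N -> (k <= n)%N ->
  ((k * N - r) * n + (k * r + (n - k)) <= N * (k * n))%N.
Proof.
move=> N0 /andP[r0 rk] /subnKC <-; set d := (n - k)%N.
have /subnK : (r <= k * N)%N by rewrite (leq_trans rk) ?leq_pmulr.
move: (k * N - r)%N => e kN.
rewrite mulnA [(N * k)%N]mulnC -kN.
have := leq_pmull d r0; nia.
Qed.

Lemma prob_not_fullrank_le (R : realType) (F : finFieldType) (gT : finGroupType) k n :
  (k <= n)%N ->
  prob_not_fullrank R F gT k n <=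
    (#|F|%:R : R) ^+ (#|gT| * #|gT|) * (#|F|%:R^-1) ^+ (n - k).
Proof.
move=> kn; set N := #|gT|; set Q := #|F|.
have Q0 : (0 < Q)%N by apply/card_gt0P; exists 0.
have N0 : (0 < N)%N by apply/card_gt0P; exists 1%g.
rewrite /prob_not_fullrank card_mx card_ffun -expnM.
have := card_not_fullrank_le F gT k n; rewrite -(ler_nat R).
move=> /(ler_wpM2r (_ : 0 <= (Q ^ (N * (k * n)))%:R^-1)) /le_trans-> //.
  by rewrite invr_ge0 ler0n.
rewrite natr_sum mulr_suml.
apply: (@le_trans _ _ (\sum_(B : 'M[F]_(k, N) | B != 0)
    ((Q%:R : R) ^+ (k * \rank B))^-1 * Q%:R^-1 ^+ (n - k))).
  apply: ler_sum => B nzB.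
  have rB : (0 < \rank B <= k)%N by rewrite lt0n mxrank_eq0 nzB rank_leq_row.
  rewrite exprVn -invfM -!natrX -natrM ler_pdivrMr ?ltr0n ?expn_gt0 ?Q0 //.
  rewrite ler_pdivlMl ?ltr0n ?muln_gt0 ?expn_gt0 ?Q0 // -natrM ler_nat.
  rewrite -!expnM -!expnD leq_pexp2l // card_prod card_ord.
  by rewrite addnC not_fullrank_exponent_le.
rewrite -mulr_suml; apply: ler_wpM2r; first by rewrite exprn_ge0 ?invr_ge0.
apply: le_trans (sum_invX_rank_le F R k N).
rewrite [leLHS]big_mkcond /=; apply: ler_sum => B _.
by case: ifP => // _; rewrite invr_ge0 exprn_ge0.
Qed.

Lemma bernoulli_ineq (R : realFieldType) (x : R) m :
  -1 <= x -> 1 + m%:R * x <= (1 + x) ^+ m.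
Proof.
move=> x_ge; elim: m => [|m IH]; first by rewrite mul0r addr0 expr0.
have x1_ge0 : 0 <= 1 + x by lra.
rewrite exprSr; apply: le_trans (ler_wpM2r x1_ge0 IH).
have : 0 <= m%:R * x ^+ 2 by rewrite mulr_ge0 ?ler0n ?sqr_ge0.
rewrite -natr1; nra.
Qed.

Lemma expr_divn_le (R : realFieldType) L : (0 < L)%N ->
  exists2 q : R, 0 < q < 1 & forall n, 2^-1 ^+ (n %/ L) <= 2 * q ^+ n.
Proof.
move=> L0; set x : R := (2 * L%:R)^-1.
have Lx : L%:R * x = 2^-1 by rewrite /x invfM mulrCA mulfV ?mulr1 // pnatr_eq0 -lt0n.
have x01 : 0 < x <= 2^-1.
  rewrite invr_gt0 mulr_gt0 ?ltr0n //= lef_pV2 ?posrE ?mulr_gt0 ?ltr0n //.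
  by rewrite ler_peMr ?ler1n.
exists (1 - x) => [|n]; first lra.
have qL : 2^-1 <= (1 - x) ^+ L.
  have := @bernoulli_ineq _ (- x) L; rewrite mulrN Lx; lra.
have qn : (1 - x) ^+ ((n %/ L).+1 * L) <= (1 - x) ^+ n.
  by apply: ler_wiXn2l; [lra | lra | exact/ltnW/ltn_ceil].
have -> : 2^-1 ^+ (n %/ L) = 2 * 2^-1 ^+ (n %/ L).+1 :> R.
  by rewrite exprS mulVKf ?pnatr_eq0.
rewrite ler_pM2l //; apply: le_trans qn.
by rewrite mulnC exprM lerXn2r // nnegrE; lra.
Qed.

Lemma nearest_k_le (R : realType) (r : R) n : r <= 1 -> (nearest_k r n <= n)%N.
Proof.
move=> r1; rewrite /nearest_k truncn_le_nat -[n.+1%:R]natr1.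
have : r * n%:R <= n%:R by rewrite ler_piMl.
lra.
Qed.

(* n - [r n] >= (1 - r) n - 1/2, which dominates n / L once L (1 - r) >= 1. *)
Lemma nearest_k_gap (R : realType) (r : R) : 0 <= r -> r < 1 ->
  exists2 L, (0 < L)%N & forall n, (n %/ L <= n - nearest_k r n)%N.
Proof.
move=> r0 r1; set L := (Num.truncn (1 - r)^-1).+1.
have L1r : 1 <= L%:R * (1 - r).
  rewrite -ler_pdivrMr ?subr_gt0 // div1r ltW //.
  exact: truncnS_gt.
exists L => // n; set k := nearest_k r n; set m := (n %/ L)%N.
have kR : k%:R <= r * n%:R + 2^-1.
  by rewrite /k /nearest_k truncn_le addr_ge0 ?mulr_ge0 ?invr_ge0 ?ler0n.
have mLn : m%:R * L%:R <= n%:R :> R by rewrite -natrM ler_nat leq_divM.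
have gap : (1 - r) * (m%:R * L%:R) <= (1 - r) * n%:R by rewrite ler_pM2l ?subr_gt0.
have mle : m%:R <= L%:R * (1 - r) * m%:R by rewrite ler_peMl ?ler0n.
rewrite (_ : (1 - r) * _ = L%:R * (1 - r) * m%:R) in gap; last by ring.
rewrite -ltnS -(ltr_nat R) -natr1 natrB ?nearest_k_le ?ltW //.
lra.
Qed.

Theorem lemma6p3 (R : realType) (F : finFieldType) (gT : finGroupType) (r : R) :
  abelian [set: gT] -> 0 < r < 1 ->
  exists C q : R, 0 < q < 1 /\
    forall n : nat,
      prob_not_fullrank R F gT (nearest_k r n) n <= C * q ^+ n.
Proof.
move=> _ /andP[r0 r1]; set Q : R := #|F|%:R.
have [L L0 gapL] := nearest_k_gap (ltW r0) r1.
have [q q01 decay] := expr_divn_le R L0.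
have Q2 : 2 <= Q.
  by rewrite ler_nat; apply/card_gt1P; exists 0, 1; rewrite eq_sym oner_eq0.
exists (Q ^+ (#|gT| * #|gT|) * 2), q; split => // n.
apply: le_trans (prob_not_fullrank_le _ _ _ (nearest_k_le n (ltW r1))) _.
rewrite -mulrA ler_pM2l ?exprn_gt0 //; last by lra.
apply: le_trans (decay n); apply: (@le_trans _ _ (2^-1 ^+ (n - nearest_k r n))).
  by rewrite lerXn2r ?nnegrE ?invr_ge0 ?lef_pV2 ?posrE //; lra.
by apply: ler_wiXn2l => //; lra.
Qed.
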